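(* Under the hypotheses of the previous theorem (model $\mathfrak{M}$, variable $x$, Boolean expression $f$, formulas $\theta,\varphi_1,\dots,\varphi_n$ with each $\varphi_i$ non-dependent of $x$ in $\mathfrak{M}$ provided $\theta$, variables $z_1,\dots,z_m$ distinct from $x$ and not free in $\theta$, quantifiers $Q_1,\dots,Q_m\in\{\forall,\exists\}$), if $\mathfrak{M}\models\exists x\theta$ then $$[\![Q_mz_m\dots Q_1z_1\,f\big(\exists x(\theta\land\varphi_1),\dots,\exists x(\theta\land\varphi_n)\big)]\!]^{\mathfrak{M}}=[\![\exists x\big(\theta\land Q_mz_m\dots Q_1z_1\,f(\varphi_1,\dots,\varphi_n)\big)]\!]^{\mathfrak{M}},$$ and moreover in this equation any of the occurrences of $\exists x(\theta\land\cdot)$ may be replaced by $\forall x(\theta\to\cdot)$ without changing the meanings.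
   Context: Work in first-order logic with equality over a relational signature, with countably many variables $v_1,v_2,\dots$. A model $\mathfrak{M}$ has nonempty universe $M$; assignments are $\bar a\in M^\omega$ ($a_i$ is the value of $v_i$); for $x=v_i$, $b\in M$, $\bar a^x_b$ is $\bar a$ with $i$-th entry replaced by $b$. $[\![\varphi]\!]^{\mathfrak{M}}=\{\bar a\in M^\omega:\mathfrak{M}\models\varphi[\bar a]\}$; $\mathfrak{M}\models\chi$ means every $\bar a$ satisfies $\chi$. A Boolean expression is built from its arguments using $\neg$ and $\land$. Definition: $\varphi$ is non-dependent of $x$ in $\mathfrak{M}$ provided $\theta$ iff for all $\bar a\in M^\omega$, $b\in M$: if $\mathfrak{M}\models\theta[\bar a]$ and $\mathfrak{M}\models\theta[\bar a^x_b]$ then ($\mathfrak{M}\models\varphi[\bar a]\iff\mathfrak{M}\models\varphi[\bar a^x_b]$). *)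

From mathcomp Require Import all_boot.
Set Implicit Arguments. Unset Strict Implicit. Unset Printing Implicit Defensive.

Record signature := Signature { rsym : Type; arity : rsym -> nat }.

(* Variables v_1, v_2, ... are represented by natural numbers (v_{i+1} ~ i). *)
Definition var := nat.

Inductive formula (S : signature) : Type :=
| FRel (r : rsym S) (args : 'I_(arity r) -> var)
| FEq (x y : var)
| FNeg (p : formula S)
| FAnd (p q : formula S)
| FImp (p q : formula S)
| FEx (x : var) (p : formula S)
| FAll (x : var) (p : formula S).

Record model (S : signature) := Model {
  univ : Type;
  univ_elt : univ;
  interp : forall r : rsym S, ('I_(arity r) -> univ) -> Prop }.

Definition assignment S (M : model S) := var -> univ M.

Definition upd S (M : model S) (a : assignment M) (x : var) (b : univ M)
  : assignment M := fun i => if i == x then b else a i.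

Fixpoint sat (S : signature) (M : model S) (p : formula S) (a : assignment M) {struct p} : Prop :=
  match p with
  | FRel r args => @interp S M r (fun k => a (args k))
  | FEq x y => a x = a y
  | FNeg q => ~ @sat S M q a
  | FAnd q1 q2 => @sat S M q1 a /\ @sat S M q2 a
  | FImp q1 q2 => @sat S M q1 a -> @sat S M q2 a
  | FEx x q => exists b, @sat S M q (upd a x b)
  | FAll x q => forall b, @sat S M q (upd a x b)
  end.

Arguments sat {S} M p a.

Definition valid S (M : model S) (p : formula S) : Prop :=
  forall a : assignment M, sat M p a.

Fixpoint free S (z : var) (p : formula S) : Prop :=
  match p with
  | FRel r args => exists k, args k = z
  | FEq x y => x = z \/ y = z
  | FNeg q => free z q
  | FAnd q1 q2 | FImp q1 q2 => free z q1 \/ free z q2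
  | FEx x q | FAll x q => x <> z /\ free z q
  end.

Definition non_dependent S (M : model S) (phi : formula S) (x : var)
  (theta : formula S) : Prop :=
  forall (a : assignment M) (b : univ M),
    sat M theta a -> sat M theta (upd a x b) ->
    (sat M phi a <-> sat M phi (upd a x b)).

Inductive bexp (n : nat) : Type :=
| BArg (i : 'I_n)
| BNeg (f : bexp n)
| BAnd (f g : bexp n).

Fixpoint bapp S n (f : bexp n) (args : 'I_n -> formula S) : formula S :=
  match f with
  | BArg i => args i
  | BNeg g => FNeg (bapp g args)
  | BAnd g h => FAnd (bapp g args) (bapp h args)
  end.

(* Quantifiers: true = forall, false = exists. *)
Definition quant S (Q : bool) (z : var) (p : formula S) : formula S :=
  if Q then FAll z p else FEx z p.

(* qprefix [:: (Q_1,z_1); ...; (Q_m,z_m)] psi = Q_m z_m ... Q_1 z_1 psi *)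
Fixpoint qprefix S (qs : seq (bool * var)) (p : formula S) : formula S :=
  match qs with
  | [::] => p
  | (Q, z) :: qs' => qprefix qs' (quant Q z p)
  end.

(* relativization: false gives  exists x (theta /\ psi),
                   true  gives  forall x (theta -> psi) *)
Definition relat S (c : bool) (x : var) (theta p : formula S) : formula S :=
  if c then FAll x (FImp theta p) else FEx x (FAnd theta p).

(* Call p and p' "x-equivalent provided theta" when p holds at a exactly when
   p' holds at a^x_b, for every b satisfying theta.  Each relativization of
   phi_i is x-equivalent to phi_i, because phi_i does not depend on x among
   theta-witnesses.  This relation is preserved by Boolean combinations and,
   since the z_j are distinct from x and not free in theta, by quantifying the
   z_j.  Finally, when theta always has a witness, a formula x-equivalent to
   psi is equivalent to both relativizations of psi. *)
From mathcomp Require Import all_boot.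
From Stdlib Require Import FunctionalExtensionality Setoid.

Section Assignments.

Variables (S : signature) (M : model S).
Implicit Types (a : assignment M) (x z : var).

Lemma upd_upd a x b b' : upd (upd a x b) x b' = upd a x b'.
Proof. by apply: functional_extensionality => i; rewrite /upd; case: (i == x). Qed.

Lemma upd_comm a x z b e : z <> x ->
  upd (upd a x b) z e = upd (upd a z e) x b.
Proof.
move=> zx; apply: functional_extensionality => i; rewrite /upd.
by case: (eqVneq i z) => [->|//]; case: eqVneq.
Qed.

Lemma sat_agree_free (p : formula S) a a' :
  (forall v, free v p -> a v = a' v) -> (sat M p a <-> sat M p a').
Proof.
elim: p a a' => /= [r args|y z|q IH|q IHq r IHr|q IHq r IHr|y q IH|y q IH] a a' agree.
- have -> // : (fun k => a (args k)) = (fun k => a' (args k)).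
  by apply: functional_extensionality => k; apply: agree; exists k.
- by rewrite (agree y (or_introl erefl)) (agree z (or_intror erefl)).
- by rewrite (IH a a' agree).
- by rewrite (IHq a a') ?(IHr a a') // => v fv; apply: agree; auto.
- by rewrite (IHq a a') ?(IHr a a') // => v fv; apply: agree; auto.
- have E b : sat M q (upd a y b) <-> sat M q (upd a' y b).
    apply: IH => v fv; rewrite /upd; case: eqVneq => // /eqP vy; apply: agree; auto.
  by split=> -[b hb]; exists b; apply/E.
- have E b : sat M q (upd a y b) <-> sat M q (upd a' y b).
    apply: IH => v fv; rewrite /upd; case: eqVneq => // /eqP vy; apply: agree; auto.
  by split=> hb b; apply/E.
Qed.

Lemma sat_upd_notfree (p : formula S) a z e :
  ~ free z p -> (sat M p (upd a z e) <-> sat M p a).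
Proof.
move=> nfz; apply: sat_agree_free => v fv; rewrite /upd.
by case: eqVneq => // vz; subst v.
Qed.

End Assignments.

Section WitnessEquivalence.

Variables (S : signature) (M : model S) (x : var) (theta : formula S).

Definition witness_equiv (p p' : formula S) :=
  forall (a : assignment M) b, sat M theta (upd a x b) ->
    (sat M p a <-> sat M p' (upd a x b)).

Lemma relat_witness_equiv (c : bool) (phi : formula S) :
  non_dependent M phi x theta -> witness_equiv (relat c x theta phi) phi.
Proof.
move=> nd a b thb.
have phi_indep b' : sat M theta (upd a x b') ->
    (sat M phi (upd a x b) <-> sat M phi (upd a x b')).
  by move=> thb'; rewrite -(@upd_upd _ _ a x b b'); apply: nd; rewrite ?upd_upd.
case: c => /=; split.
- exact.
- by move=> phib b' thb'; apply/(phi_indep b' thb').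
- by move=> [b' [thb' phib']]; apply/(phi_indep b' thb').
- by move=> phib; exists b.
Qed.

Lemma bapp_witness_equiv n (f : bexp n) (args args' : 'I_n -> formula S) :
  (forall i, witness_equiv (args i) (args' i)) ->
  witness_equiv (bapp f args) (bapp f args').
Proof.
move=> eqv; elim: f => [i|g IH|g IHg h IHh] a b thb /=; first exact: eqv.
- by rewrite (IH a b thb).
- by rewrite (IHg a b thb) (IHh a b thb).
Qed.

Lemma quant_witness_equiv (Q : bool) (z : var) (p p' : formula S) :
  z <> x -> ~ free z theta -> witness_equiv p p' ->
  witness_equiv (quant Q z p) (quant Q z p').
Proof.
move=> zx nfz eqv a b thb.
have thb_z e : sat M theta (upd (upd a z e) x b).
  by rewrite -upd_comm // sat_upd_notfree.
have eqv_z e : sat M p (upd a z e) <-> sat M p' (upd (upd a x b) z e).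
  by rewrite upd_comm //; apply: eqv.
case: Q => /=; split.
- by move=> pe e; apply/eqv_z.
- by move=> pe e; apply/eqv_z.
- by move=> [e pe]; exists e; apply/eqv_z.
- by move=> [e pe]; exists e; apply/eqv_z.
Qed.

Lemma qprefix_witness_equiv (qs : seq (bool * var)) (p p' : formula S) :
  (forall Qz, Qz \in qs -> Qz.2 <> x /\ ~ free Qz.2 theta) ->
  witness_equiv p p' -> witness_equiv (qprefix qs p) (qprefix qs p').
Proof.
elim: qs p p' => [//|[Q z] qs IH] p p' qsx eqv /=.
have [zx nfz] := qsx (Q, z) (mem_head _ _).
apply: IH; last exact: quant_witness_equiv.
by move=> Qz Qz_qs; apply: qsx; rewrite in_cons Qz_qs orbT.
Qed.

Lemma witness_equiv_relat (p p' : formula S) :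
  valid M (FEx x theta) -> witness_equiv p p' ->
  forall (d : bool) (a : assignment M), sat M p a <-> sat M (relat d x theta p') a.
Proof.
move=> ex_theta eqv d a; have [b0 thb0] := ex_theta a.
case: d => /=; split.
- by move=> pa b thb; apply/(eqv a b thb).
- by move=> all_p'; apply/(eqv a b0 thb0); apply: all_p'.
- by move=> pa; exists b0; split => //; apply/(eqv a b0 thb0).
- by move=> [b [thb p'b]]; apply/(eqv a b thb).
Qed.

End WitnessEquivalence.

Theorem mainTheorem11 (S : signature) (M : model S) (x : var) (n : nat)
    (f : bexp n) (theta : formula S) (phi : 'I_n -> formula S)
    (qs : seq (bool * var)) :
  (forall i : 'I_n, non_dependent M (phi i) x theta) ->
  (forall Qz, Qz \in qs -> Qz.2 <> x /\ ~ free Qz.2 theta) ->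
  valid M (FEx x theta) ->
  forall (c : 'I_n -> bool) (d : bool) (a : assignment M),
    sat M (qprefix qs (bapp f (fun i => relat (c i) x theta (phi i)))) a <->
    sat M (relat d x theta (qprefix qs (bapp f phi))) a.
Proof.
move=> nd qsx ex_theta c.
apply: witness_equiv_relat => //.
apply: qprefix_witness_equiv => //.
by apply: bapp_witness_equiv => i; apply: relat_witness_equiv.
Qed.
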